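(* The multiplicative GNS $s(n)=q^n-1$ on $\mathbf Z[[q-1]]$ is $\mathbf T$-Green: for all positive integers $m$ and $a,b\mid m$, with $g=\gcd(a,b)$ and $\ell=\operatorname{lcm}(a,b)$, \[ q^m-1\equiv\frac m\ell\cdot\frac{(q^a-1)(q^b-1)}{q^g-1}\bmod (q^a-1)(q^b-1). \]
   Context: A GNS over $D$ is $s\colon\mathbf N\to D$ with $s(0)=0$, $s(n)$ a non-zero-divisor for $n>0$, $s(n-k)\mid s(n)-s(k)$ for $n>k>0$. $\mathbf T$-Green means the congruence $s(m)\equiv\frac m\ell\frac{s(a)s(b)}{s(g)}\bmod s(a)s(b)$ holds for all $m\ge1$ and $a,b\mid m$. *)

From mathcomp Require Import all_boot all_order all_algebra.
Set Implicit Arguments. Unset Strict Implicit. Unset Printing Implicit Defensive.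
Import GRing.Theory Num.Theory.
Local Open Scope ring_scope.

(* The ring Z[[q-1]] is modelled as formal power series in t := q - 1 with
   integer coefficients, i.e. coefficient sequences  nat -> int  with the
   Cauchy product.  Every element occurring in the statement is a polynomial
   in q, hence a polynomial in t; we represent it as an element of {poly int}
   in the variable t, and embed {poly int} into Z[[t]] via its coefficients. *)

Definition pseries := nat -> int.

Definition psmul (f g : pseries) : pseries :=
  fun n => \sum_(i < n.+1) f i * g (n - i)%N.

Definition ps_of_poly (p : {poly int}) : pseries := fun n => p`_n.

Definition ps_congr (x y M : {poly int}) : Prop :=
  exists c : pseries, ps_of_poly (x - y) = psmul (ps_of_poly M) c.

Definition qvar : {poly int} := 1 + 'X.

Definition gns_s (n : nat) : {poly int} := qvar ^+ n - 1.

(** The moduli are products of geometric sums, so after the substitution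
    y := q^g the statement reduces to the coprime case: for [coprime a b] and
    [m = a b k], writing [q^m - 1 = (q^a - 1) T] with
    [T = \sum_(j < b k) q^(a j)], one needs [q^b - 1 | T - k \sum_(i < b) q^i].
    Modulo [q^b - 1] each [q^(a j)] only depends on [a j mod b], and
    [j |-> a j mod b] runs [k] times through a permutation of [0 .. b-1]. *)

From mathcomp Require Import all_boot all_order all_algebra.
From mathcomp Require Import zify.
From Stdlib Require Import FunctionalExtensionality.
Import GRing.Theory.
Set Implicit Arguments. Unset Strict Implicit. Unset Printing Implicit Defensive.
Local Open Scope ring_scope.

Section RingDivisibility.
Variable R : comPzRingType.
Implicit Types (d x y : R).

Definition dvdr d x := exists c, x = d * c.

Lemma dvdr0 d : dvdr d 0.
Proof. by exists 0; rewrite mulr0. Qed.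

Lemma dvdrr d : dvdr d d.
Proof. by exists 1; rewrite mulr1. Qed.

Lemma dvdr_mul d1 d2 x1 x2 : dvdr d1 x1 -> dvdr d2 x2 -> dvdr (d1 * d2) (x1 * x2).
Proof. by move=> [c1 ->] [c2 ->]; exists (c1 * c2); rewrite mulrACA. Qed.

Lemma dvdr_mulr d x : dvdr d (d * x).
Proof. by exists x. Qed.

Lemma dvdrD d x y : dvdr d x -> dvdr d y -> dvdr d (x + y).
Proof. by move=> [c ->] [c' ->]; exists (c + c'); rewrite mulrDr. Qed.

Lemma dvdr_sum d n (F : 'I_n -> R) : (forall i, dvdr d (F i)) -> dvdr d (\sum_(i < n) F i).
Proof. by move=> dF; apply: (big_ind (dvdr d)); [exact: dvdr0 | exact: dvdrD |]. Qed.

Lemma dvdr_subrX_modn y b n : dvdr (y ^+ b - 1) (y ^+ n - y ^+ (n %% b)).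
Proof.
have -> : y ^+ n - y ^+ (n %% b) = (y ^+ b - 1) * (\sum_(i < n %/ b) (y ^+ b) ^+ i * y ^+ (n %% b)).
  by rewrite -mulr_suml mulrA -subrX1 mulrBl mul1r -exprM -exprD mulnC -divn_eq.
exact: dvdr_mulr.
Qed.

End RingDivisibility.

Lemma sum_modn_periodic (V : nmodType) (F : nat -> V) b k :
  \sum_(j < b * k) F (j %% b)%N = (\sum_(j < b) F j) *+ k.
Proof.
elim: k => [|k IHk]; first by rewrite muln0 big_ord0.
rewrite mulnSr big_split_ord /= IHk mulrSr; congr (_ + _).
by apply: eq_bigr => j _; rewrite mulnC modnMDl modn_small.
Qed.

Lemma mulmodn_inj a b i j : coprime a b -> (i < b)%N -> (j < b)%N ->
  (a * i = a * j %[mod b])%N -> i = j.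
Proof.
wlog le_ij : i j / (i <= j)%N.
  by move=> wlog_ij co ib jb eq_ij; case: (leqP i j) => [|/ltnW] le;
    [|apply/esym]; apply: wlog_ij => //.
move=> co _ jb /esym/eqP; rewrite eqn_mod_dvd ?leq_mul2l ?le_ij ?orbT //.
rewrite -mulnBr Gauss_dvdr 1?coprime_sym //.
by case: (posnP (j - i)) => [|ji_gt0 /(dvdn_leq ji_gt0)]; lia.
Qed.

Lemma sum_mulmodn_coprime (V : nmodType) (F : nat -> V) a b : coprime a b ->
  \sum_(i < b) F (a * i %% b)%N = \sum_(i < b) F i.
Proof.
case: b => [|b] co; first by rewrite !big_ord0.
pose mul_a (i : 'I_b.+1) := Ordinal (ltn_pmod (a * i) (ltn0Sn b)).
have mul_a_inj : injective mul_a.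
  move=> i j /(congr1 val) /= eq_ij.
  exact/val_inj/(mulmodn_inj co (ltn_ord i) (ltn_ord j) eq_ij).
by rewrite [RHS](reindex_inj mul_a_inj).
Qed.

Lemma sum_mulmodn_periodic (V : nmodType) (F : nat -> V) a b k : coprime a b ->
  \sum_(j < b * k) F (a * j %% b)%N = (\sum_(i < b) F i) *+ k.
Proof.
move=> co; rewrite -(sum_mulmodn_coprime F co).
rewrite -(sum_modn_periodic (fun i => F (a * i %% b)%N)).
by apply: eq_bigr => j _; rewrite modnMmr.
Qed.

Lemma dvdr_geom_sum_coprime (R : comPzRingType) (y : R) a b k : coprime a b ->
  dvdr (y ^+ b - 1) (\sum_(j < b * k) (y ^+ a) ^+ j - (\sum_(i < b) y ^+ i) *+ k).
Proof.
move=> co; rewrite -(sum_mulmodn_periodic (fun i => y ^+ i) k co) -sumrB.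
by apply: dvdr_sum => j; rewrite -exprM; apply: dvdr_subrX_modn.
Qed.

Lemma green_congr_coprime (R : comPzRingType) (y : R) a b k : coprime a b ->
  dvdr ((y ^+ a - 1) * (y ^+ b - 1))
       (y ^+ (a * b * k) - 1 - k%:R * ((y ^+ a - 1) * \sum_(i < b) y ^+ i)).
Proof.
move=> co.
have -> : y ^+ (a * b * k) - 1 = (y ^+ a - 1) * \sum_(j < b * k) (y ^+ a) ^+ j.
  by rewrite -mulnA exprM subrX1.
rewrite mulr_natl -mulrnAr -mulrBr.
exact: dvdr_mul (dvdrr _) (dvdr_geom_sum_coprime _ _ co).
Qed.

Lemma subrX1_dvdn (R : comPzRingType) (x : R) g n : (g %| n)%N ->
  x ^+ n - 1 = (x ^+ g - 1) * \sum_(i < n %/ g) x ^+ (g * i).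
Proof.
move=> gn; rewrite -{1}(divnK gn) mulnC exprM subrX1.
by under eq_bigr do rewrite -exprM.
Qed.

Lemma coprime_divn_gcdn a b : (0 < gcdn a b)%N -> coprime (a %/ gcdn a b) (b %/ gcdn a b).
Proof.
move=> g_gt0; rewrite /coprime -(eqn_pmul2r g_gt0) mul1n muln_gcdl.
by rewrite !divnK ?dvdn_gcdl ?dvdn_gcdr.
Qed.

(* The last factor is [s(a) s(b) / s(g)], written without division so that
   the congruence makes sense in any commutative ring. *)
Lemma green_congr (R : comPzRingType) (x : R) m a b :
  (0 < m)%N -> (a %| m)%N -> (b %| m)%N ->
  dvdr ((x ^+ a - 1) * (x ^+ b - 1))
       (x ^+ m - 1 - (m %/ lcmn a b)%:R *
          ((x ^+ a - 1) * \sum_(i < b %/ gcdn a b) x ^+ (gcdn a b * i))).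
Proof.
move=> m_gt0 am bm; set g := gcdn a b; set k := (m %/ lcmn a b)%N.
have g_gt0 : (0 < g)%N by rewrite gcdn_gt0 (dvdn_gt0 m_gt0 am).
have powE n : (g %| n)%N -> x ^+ n = (x ^+ g) ^+ (n %/ g).
  by move=> gn; rewrite -exprM mulnC divnK.
have gm : (g %| m)%N := dvdn_trans (dvdn_gcdl a b) am.
have mE : (m %/ g = a %/ g * (b %/ g) * k)%N.
  have lcmE : lcmn a b = (a %/ g * (b %/ g) * g)%N.
    by rewrite mulnAC divnK ?dvdn_gcdl // muln_divA ?dvdn_gcdr.
  have -> : m = (a %/ g * (b %/ g) * k * g)%N.
    by rewrite mulnAC -lcmE mulnC divnK // dvdn_lcm am bm.
  by rewrite mulnK.
rewrite (powE a (dvdn_gcdl a b)) (powE b (dvdn_gcdr a b)) (powE m gm) mE.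
under eq_bigr do rewrite exprM.
exact/green_congr_coprime/coprime_divn_gcdn.
Qed.

Lemma monic_gns_s g : (0 < g)%N -> gns_s g \is monic.
Proof.
move=> g_gt0; have qvarE : qvar = 'X - (-1)%:P by rewrite polyCN opprK addrC.
have size_qvarX : size (qvar ^+ g) = g.+1 by rewrite qvarE size_exp_XsubC.
rewrite monicE lead_coefDl; first by rewrite qvarE -monicE monic_exp ?monicXsubC.
by rewrite size_opp size_poly1 size_qvarX ltnS.
Qed.

Lemma ps_congr_dvdr (x y M : {poly int}) : dvdr M (x - y) -> ps_congr x y M.
Proof.
move=> [c xyE]; exists (ps_of_poly c); rewrite xyE.
by apply: functional_extensionality => n; rewrite /ps_of_poly /psmul coefM.
Qed.

Theorem lemma5p15 (m a b : nat) :
  (0 < m)%N -> (a %| m)%N -> (b %| m)%N ->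
  ps_congr (gns_s m)
           (((m %/ lcmn a b)%N)%:R * ((gns_s a * gns_s b) %/ gns_s (gcdn a b)))
           (gns_s a * gns_s b).
Proof.
move=> m_gt0 am bm.
have g_gt0 : (0 < gcdn a b)%N by rewrite gcdn_gt0 (dvdn_gt0 m_gt0 am).
have gns_sbE : gns_s b = gns_s (gcdn a b) * \sum_(i < b %/ gcdn a b) qvar ^+ (gcdn a b * i).
  exact: subrX1_dvdn (dvdn_gcdr a b).
rewrite [in X in X %/ _]gns_sbE mulrCA Pdiv.IdomainMonic.mulKp ?monic_gns_s //.
exact/ps_congr_dvdr/green_congr.
Qed.
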